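(* Let $m\ge 0$ be an integer and let $\rho_{\mathrm{ord}}:\mathbf U\to\mathrm{End}_R(V^{\otimes m})$ be the representation of $\mathbf U$ on $V^{\otimes m}$. Then $\rho_{\mathrm{ord}}(\mathbf U)=\rho_{\mathrm{ord}}(\mathbf U')$.
   Context: $R$ is a commutative ring with $1$, $q\in R$ invertible, $n\ge1$. Let $U_q(\mathfrak{gl}_n)$ be the $\mathbb{Q}(q)$-algebra ($q$ an indeterminate) generated by $e_i,f_i$ ($1\le i\le n-1$) and $q^h$ ($h\in P^\vee=\bigoplus_{j=1}^n\mathbb Z h_j$) with the usual relations: $q^0=1$, $q^hq^{h'}=q^{h+h'}$, $q^he_iq^{-h}=q^{\alpha_i(h)}e_i$, $q^hf_iq^{-h}=q^{-\alpha_i(h)}f_i$, $e_if_j-f_je_i=\delta_{ij}\frac{K_i-K_i^{-1}}{q-q^{-1}}$ with $K_i=q^{h_i-h_{i+1}}$, and the quantum Serre relations; here $\varepsilon_j(h_k)=\delta_{jk}$, $\alpha_i=\varepsilon_i-\varepsilon_{i+1}$. Comultiplication: $\Delta(q^h)=q^h\otimes q^h$, $\Delta(e_i)=e_i\otimes K_i^{-1}+1\otimes e_i$, $\Delta(f_i)=f_i\otimes 1+K_i\otimes f_i$. With $[l]_q=\sum_{i=0}^{l-1}q^{2i-l+1}$, $e_i^{(l)}=e_i^l/[l]_q!$, $f_i^{(l)}=f_i^l/[l]_q!$, let $\mathbf U_{\mathbb Z}$ (resp. $\mathbf U'_{\mathbb Z}$) be the $\mathbb Z[q,q^{-1}]$-subalgebra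 generated by all $q^h$ (resp. all $K_i$) and all $e_i^{(l)},f_i^{(l)}$, and $\mathbf U=R\otimes\mathbf U_{\mathbb Z}$, $\mathbf U'=R\otimes\mathbf U'_{\mathbb Z}\subseteq\mathbf U$ (specializing $q\mapsto q$). $V=R^n$ with basis $v_1,\dots,v_n$ is the $\mathbf U$-module with $q^hv_j=q^{\varepsilon_j(h)}v_j$, $e_iv_{i+1}=v_i$, $e_iv_j=0$ ($j\ne i+1$), $f_iv_i=v_{i+1}$, $f_iv_j=0$ ($j\ne i$) (the $R$-form of the vector representation); $\mathbf U$ acts on $V^{\otimes m}$ via the comultiplication. *)

From HB Require Import structures.
From mathcomp Require Import all_boot all_order all_algebra.
Set Implicit Arguments. Unset Strict Implicit. Unset Printing Implicit Defensive.
Import Order.TTheory GRing.Theory Num.Theory.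
Local Open Scope ring_scope.

(* Conventions: basis v_1..v_n of V is indexed by 'I_n (0-based), the
   Chevalley index i (1 <= i <= n-1 in the paper) by a nat i with i.+1 < n;
   e_i sends v_(i+1) to v_i (0-based: index i.+1 to index i).
   V^{(x)m} is the free R-module with basis v_J, J : {ffun 'I_m -> 'I_n};
   End_R(V^{(x)m}) is identified with 'M[R]_(#|tens n m|) via enum_rank,
   with A a b = coefficient of v_(enum_val a) in A v_(enum_val b). *)

Section Rep.
Variables (R : comPzRingType) (q qi : R) (n m : nat).

(* q^z for z : int, qi being the inverse of q *)
Definition qpow (z : int) : R :=
  match z with Posz k => q ^+ k | Negz k => qi ^+ k.+1 end.

Definition tens := {ffun 'I_m -> 'I_n}.
Definition N := #|{: tens}|.
Definition EndV := 'M[R]_N.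

Definition mx_of (coef : tens -> tens -> R) : EndV :=
  \matrix_(a, b) coef (enum_val a) (enum_val b).

(* alpha_i(eps_j) = (j == i) - (j == i+1) : the exponent of K_i on v_j *)
Definition cw (i : nat) (j : 'I_n) : int :=
  ((nat_of_ord j == i) : int) - ((nat_of_ord j == i.+1) : int).

(* q^h, h = sum_j h_j (coefficients h : 'I_n -> int), acting diagonally *)
Definition qh_mx (h : 'I_n -> int) : EndV :=
  mx_of (fun J' J => if J' == J then qpow (\sum_(k < m) h (J k)) else 0).

(* K_i = q^(h_i - h_(i+1)) *)
Definition K_mx (i : nat) : EndV :=
  mx_of (fun J' J => if J' == J then qpow (\sum_(k < m) cw i (J k)) else 0).

Definition diffset (J' J : tens) : {set 'I_m} := [set k | J' k != J k].

(* action of the divided power e_i^(l) on V^{(x)m} (via the iterated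
   comultiplication): v_J |-> sum over sets S of positions carrying v_(i+1),
   |S| = l, of q^(- sum_(k in S) sum_(p > k, p notin S) alpha_i(eps_(J p)))
   times v_J with the entries in S replaced by v_i. *)
Definition e_mx (i l : nat) : EndV :=
  mx_of (fun J' J =>
    let S := diffset J' J in
    if [forall k, (J' k == J k) ||
                  ((nat_of_ord (J k) == i.+1) && (nat_of_ord (J' k) == i))]
       && (#|S| == l)
    then qpow (- \sum_(k in S) \sum_(p : 'I_m | (k < p)%N && (p \notin S))
                   cw i (J p))
    else 0).

(* action of f_i^(l): v_J |-> sum over sets S of positions carrying v_i,
   |S| = l, of q^(sum_(k in S) sum_(p < k, p notin S) alpha_i(eps_(J p)))
   times v_J with the entries in S replaced by v_(i+1). *)
Definition f_mx (i l : nat) : EndV :=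
  mx_of (fun J' J =>
    let S := diffset J' J in
    if [forall k, (J' k == J k) ||
                  ((nat_of_ord (J k) == i) && (nat_of_ord (J' k) == i.+1))]
       && (#|S| == l)
    then qpow (\sum_(k in S) \sum_(p : 'I_m | (p < k)%N && (p \notin S))
                   cw i (J p))
    else 0).

Inductive gen_alg (G : EndV -> Prop) : EndV -> Prop :=
  | ga_gen A : G A -> gen_alg G A
  | ga_one : gen_alg G 1%:M
  | ga_add A B : gen_alg G A -> gen_alg G B -> gen_alg G (A + B)
  | ga_mul A B : gen_alg G A -> gen_alg G B -> gen_alg G (A *m B)
  | ga_scale (r : R) A : gen_alg G A -> gen_alg G (r *: A).

Definition U_gens (A : EndV) : Prop :=
  (exists h : 'I_n -> int, A = qh_mx h) \/
  (exists i l : nat, (i.+1 < n)%N /\ (A = e_mx i l \/ A = f_mx i l)).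

Definition U'_gens (A : EndV) : Prop :=
  (exists i : nat, (i.+1 < n)%N /\ A = K_mx i) \/
  (exists i l : nat, (i.+1 < n)%N /\ (A = e_mx i l \/ A = f_mx i l)).

Definition rho_U (A : EndV) : Prop := gen_alg U_gens A.
Definition rho_U' (A : EndV) : Prop := gen_alg U'_gens A.

End Rep.

Arguments rho_U [R] q qi n m A.
Arguments rho_U' [R] q qi n m A.

From HB Require Import structures.
From mathcomp Require Import all_boot all_order all_algebra.
From mathcomp Require Import ring zify.
Set Implicit Arguments. Unset Strict Implicit. Unset Printing Implicit Defensive.
Import Order.TTheory GRing.Theory Num.Theory.
Local Open Scope ring_scope.

(* Both algebras contain every e_i^(l) and f_i^(l); what has to be shown is
   that rho(U') contains the diagonal operators q^h.  Such an operator acts on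
   v_J by a scalar depending only on the letter counts of J, and these counts
   are determined by the alpha_i-weights wt_i(J) = #{k | J k = i} -
   #{k | J k = i+1} (1 <= i < n) together with their sum m.  Hence it suffices
   that rho(U') contains the projectors onto the joint weight spaces.
   Lusztig's commutation formula
     e_i^(t) f_i^(t) = sum_(j <= t) [K_i; j] f_i^(t-j) e_i^(t-j),
   proved entrywise by induction on the number m of tensor factors, gives by
   induction on t that rho(U') contains the diagonal operators [K_i; t]
   (q-binomial in the weight wt_i), and then, by q-Pascal with K_i in rho(U'),
   the operators [K_i + c; t] for c >= 0.  Since wt_i + m ranges over
   [0, 2m], the matrix of q-binomials [x; y] (x, y <= 2m) is unitriangular,
   so the projector onto each single weight space of wt_i is a combination of
   these operators; the joint projectors are products of them. *)

Lemma natr_andb (R : pzSemiRingType) (b1 b2 : bool) :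
  (b1 && b2)%:R = b1%:R * b2%:R :> R.
Proof. by rewrite -mulnb natrM. Qed.

Lemma sum_delta_mulr (R : pzSemiRingType) (T : finType) (c : T) (F : T -> R) :
  \sum_(y : T) (y == c)%:R * F y = F c.
Proof.
rewrite (bigD1 c) //= eqxx mul1r big1 ?addr0 // => y /negbTE ->.
by rewrite mul0r.
Qed.

Lemma Posz_sum m (F : 'I_m -> nat) :
  (\sum_(k < m) F k)%N%:Z = \sum_(k < m) (F k)%:Z.
Proof. by rewrite (big_morph Posz PoszD (erefl (Posz 0))). Qed.

Lemma bump_ord m (k : 'I_m) : bump m k = k.
Proof. by rewrite /bump leqNgt ltn_ord. Qed.

Lemma big_ord_recr_lift (V : nmodType) m (F : 'I_m.+1 -> V) :
  \sum_(k < m.+1) F k = \sum_(k < m) F (lift ord_max k) + F ord_max.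
Proof.
rewrite big_ord_recr /=; congr (_ + _); apply: eq_bigr => k _; congr F.
by apply: val_inj; rewrite /= bump_ord.
Qed.

Lemma forall_ord_recr m (P : pred 'I_m.+1) :
  [forall k, P k] = [forall k : 'I_m, P (lift ord_max k)] && P ord_max.
Proof.
apply/forallP/andP => [H|[/forallP H1 H2] k]; first by split => //; apply/forallP.
by case: (unliftP ord_max k) => [k'|] ->.
Qed.

Section QBinomial.
Variables (R : comPzRingType) (q qi : R).
Hypothesis hq : q * qi = 1.
Local Notation qp := (qpow q qi).

Lemma qpow_subn (a b : nat) : qp (a%:Z - b%:Z) = q ^+ a * qi ^+ b.
Proof.
have qqb k : q ^+ k * qi ^+ k = 1 by rewrite -exprMn hq expr1n.
case: (leqP b a) => hab.
  by rewrite subzn //= -{2}(subnK hab) exprD -mulrA qqb mulr1.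
have -> : a%:Z - b%:Z = Negz (b - a).-1.
  rewrite NegzE prednK ?subn_gt0 // -subzn ?(ltnW hab) //; lia.
rewrite /= prednK ?subn_gt0 // -{2}(subnK (ltnW hab)) exprD mulrA mulrC mulrA.
by rewrite [qi ^+ a * _]mulrC qqb mul1r.
Qed.

Lemma int_subn (x : int) : exists a b : nat, x = a%:Z - b%:Z.
Proof.
case: x => k; first by exists k, 0%N; rewrite subr0.
by exists 0%N, k.+1; rewrite NegzE sub0r.
Qed.

Lemma qpowD x y : qp (x + y) = qp x * qp y.
Proof.
have [a [b ->]] := int_subn x; have [c [d ->]] := int_subn y.
have -> : a%:Z - b%:Z + (c%:Z - d%:Z) = (a + c)%N%:Z - (b + d)%N%:Z.
  by rewrite !PoszD; ring.
by rewrite !qpow_subn !exprD; ring.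
Qed.

(* The balanced q-binomial [x; k] = prod_(1 <= s <= k) (q^(x-s+1) - q^(s-x-1)) / (q^s - q^-s),
   given by its Pascal rule so that no division is needed. *)
Fixpoint qbin_nat (x k : nat) : R :=
  match x with
  | 0 => (k == 0)%:R
  | x'.+1 => match k with
             | 0 => 1
             | k'.+1 => qp (- (k'.+1)%:Z) * qbin_nat x' k'.+1
                        + qp (x'%:Z - k'%:Z) * qbin_nat x' k'
             end
  end.

(* [-x; k], obtained by running the Pascal rule of qbin_nat backwards *)
Fixpoint qbin_neg (k : nat) : nat -> R :=
  match k with
  | 0 => fun _ => 1
  | k'.+1 => fix g (x : nat) :=
      match x with
      | 0 => 0
      | x'.+1 => qp (k'.+1)%:Z * (g x' - qp (- (x'.+1)%:Z - k'%:Z) * qbin_neg k' x'.+1)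
      end
  end.

Definition qbin (X : int) (k : nat) : R :=
  match X with Posz x => qbin_nat x k | Negz x => qbin_neg k x.+1 end.

Lemma qbin0 X : qbin X 0 = 1.
Proof. by case: X => [[|x]|x]. Qed.

Lemma qbin_nat_small x k : (x < k)%N -> qbin_nat x k = 0.
Proof.
elim: x k => [|x IH] [|k] //= hk.
by rewrite !IH ?mulr0 ?addr0 //; lia.
Qed.

Lemma qbin_nat_id k : qbin_nat k k = 1.
Proof.
elim: k => [|k IH] //=.
by rewrite qbin_nat_small // mulr0 add0r IH subrr mulr1.
Qed.

Lemma qbinD1 X k :
  qbin (X + 1) k.+1 = qp (- (k.+1)%:Z) * qbin X k.+1 + qp (X - k%:Z) * qbin X k.
Proof.
case: X => [x|[|x]].
- by rewrite /= addn1.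
- rewrite /= mulrA (mulrC (qi ^+ _)) -exprMn hq expr1n mul1r sub0r.
  by rewrite addrC subrr.
- have -> : Negz x.+1 + 1 = Negz x by rewrite !NegzE; lia.
  rewrite /= mulrA (mulrC (qi ^+ _)) -exprMn hq expr1n mul1r.
  by rewrite NegzE subrK.
Qed.

End QBinomial.

Section Words.
Variable n : nat.

Definition snoc m (J0 : tens n m) (x : 'I_n) : tens n m.+1 :=
  [ffun k => if unlift ord_max k is Some k' then J0 k' else x].
Definition front m (J : tens n m.+1) : tens n m := [ffun k => J (lift ord_max k)].

Lemma snoc_lift m (J0 : tens n m) x k : snoc J0 x (lift ord_max k) = J0 k.
Proof. by rewrite ffunE liftK. Qed.

Lemma snoc_max m (J0 : tens n m) x : snoc J0 x ord_max = x.
Proof. by rewrite ffunE unlift_none. Qed.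

Lemma front_snoc m (J : tens n m.+1) : snoc (front J) (J ord_max) = J.
Proof.
apply/ffunP => k; rewrite ffunE; case: unliftP => [k'|] -> //.
by rewrite ffunE.
Qed.

Lemma snocK m (J0 : tens n m) x : front (snoc J0 x) = J0.
Proof. by apply/ffunP => k; rewrite ffunE snoc_lift. Qed.

Lemma sum_tens_snoc (R : nmodType) m (F : tens n m.+1 -> R) :
  \sum_(J : tens n m.+1) F J = \sum_(J0 : tens n m) \sum_(x : 'I_n) F (snoc J0 x).
Proof.
rewrite pair_bigA /= (reindex (fun p : tens n m * 'I_n => snoc p.1 p.2)) //=.
exists (fun J => (front J, J ord_max)) => [[a x] _|J _] /=.
  by rewrite snocK snoc_max.
by rewrite front_snoc.
Qed.

Lemma tens0_eq (a b : tens n 0) : a = b.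
Proof. by apply/ffunP => [[]]. Qed.

Lemma sum_tens0 (R : nmodType) (F : tens n 0 -> R) (a : tens n 0) :
  \sum_(b : tens n 0) F b = F a.
Proof. by rewrite (big_pred1 a) // => b; rewrite /= (tens0_eq b a) eqxx. Qed.

Definition ndiff m (J' J : tens n m) : nat := \sum_(k < m) (J' k != J k).

Lemma card_diffset m (J' J : tens n m) : #|diffset J' J| = ndiff J' J.
Proof.
rewrite -sum1_card big_mkcond /ndiff /=; apply: eq_bigr => k _.
by rewrite inE; case: (_ != _).
Qed.

Lemma ndiff_snoc m (a' a : tens n m) x' x :
  ndiff (snoc a' x') (snoc a x) = (ndiff a' a + (x' != x))%N.
Proof.
rewrite /ndiff big_ord_recr_lift !snoc_max; congr (_ + _)%N.
by apply: eq_bigr => k _; rewrite !snoc_lift.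
Qed.

Lemma ndiff_eq0 m (J' J : tens n m) : (ndiff J' J == 0)%N = (J' == J).
Proof.
rewrite /ndiff sum_nat_eq0; apply/forallP/eqP => [H|-> k]; last by rewrite eqxx.
by apply/ffunP => k; move: (H k); rewrite eqb0 negbK => /eqP.
Qed.

End Words.

Section MatrixOfCoefficients.
Variables (R : comPzRingType) (n m : nat).
Local Notation T := (tens n m).
Local Notation Mx := (EndV R n m).

Lemma mx_of_eq (f g : T -> T -> R) :
  (forall J' J, f J' J = g J' J) -> mx_of f = mx_of g.
Proof. by move=> E; apply/matrixP => a b; rewrite !mxE E. Qed.

Lemma mx_of_mul (f g : T -> T -> R) :
  mx_of f *m mx_of g = mx_of (fun J' J => \sum_(K : T) f J' K * g K J).
Proof.
apply/matrixP => a b; rewrite !mxE; under eq_bigr do rewrite !mxE.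
by rewrite -(big_enum_val (A := {: T}) (fun K => f (enum_val a) K * g K (enum_val b))).
Qed.

Lemma mx_of_add (f g : T -> T -> R) :
  mx_of f + mx_of g = mx_of (fun J' J => f J' J + g J' J).
Proof. by apply/matrixP => a b; rewrite !mxE. Qed.

Lemma mx_of_scale c (f : T -> T -> R) :
  c *: mx_of f = mx_of (fun J' J => c * f J' J).
Proof. by apply/matrixP => a b; rewrite !mxE. Qed.

Lemma mx_of_sum (I : finType) (P : pred I) (F : I -> T -> T -> R) :
  \sum_(j | P j) mx_of (F j) = mx_of (fun J' J => \sum_(j | P j) F j J' J).
Proof.
by apply/matrixP => a b; rewrite summxE !mxE; apply: eq_bigr => j _; rewrite mxE.
Qed.

Lemma mx_of_one : (1%:M : Mx) = mx_of (fun J' J => (J' == J)%:R).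
Proof. by apply/matrixP => a b; rewrite !mxE (inj_eq enum_val_inj). Qed.

Definition dmx (phi : T -> R) : Mx :=
  mx_of (fun J' J => if J' == J then phi J else 0).

Lemma eq_dmx phi psi : (forall J, phi J = psi J) -> dmx phi = dmx psi.
Proof. by move=> E; apply: mx_of_eq => J' J; rewrite E. Qed.

Lemma dmx_mul phi psi : dmx phi *m dmx psi = dmx (fun J => phi J * psi J).
Proof.
rewrite mx_of_mul; apply: mx_of_eq => J' J.
rewrite (bigD1 J) //= eqxx big1 ?addr0; first by case: eqP; rewrite ?mul0r ?mulr1.
by move=> K /negbTE nK; rewrite nK mulr0.
Qed.

Lemma dmx_mulmx phi (f : T -> T -> R) :
  dmx phi *m mx_of f = mx_of (fun J' J => phi J' * f J' J).
Proof.
rewrite mx_of_mul; apply: mx_of_eq => J' J.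
rewrite (bigD1 J') //= eqxx big1 ?addr0 // => K hK.
by rewrite eq_sym (negbTE hK) mul0r.
Qed.

Lemma dmx_add phi psi : dmx phi + dmx psi = dmx (fun J => phi J + psi J).
Proof. by rewrite mx_of_add; apply: mx_of_eq => J' J; case: eqP; rewrite ?addr0. Qed.

Lemma dmx_scale c phi : c *: dmx phi = dmx (fun J => c * phi J).
Proof. by rewrite mx_of_scale; apply: mx_of_eq => J' J; case: eqP; rewrite ?mulr0. Qed.

Lemma dmx_sum (I : finType) (P : pred I) (F : I -> T -> R) :
  \sum_(j | P j) dmx (F j) = dmx (fun J => \sum_(j | P j) F j J).
Proof.
rewrite mx_of_sum; apply: mx_of_eq => J' J.
by case: eqP => _ //; rewrite big1.
Qed.

Lemma dmx0 : dmx (fun _ => 0) = 0.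
Proof. by apply/matrixP => a b; rewrite !mxE; case: (_ == _). Qed.

Lemma dmx1 : dmx (fun _ => 1) = 1%:M.
Proof. by rewrite mx_of_one; apply: mx_of_eq => J' J; case: eqP. Qed.

End MatrixOfCoefficients.

Section GeneratedAlgebra.
Variables (R : comPzRingType) (n m : nat) (G : EndV R n m -> Prop).
Local Notation GA := (gen_alg G).

Lemma ga_zero : GA 0.
Proof. by rewrite -(scale0r (1%:M : EndV R n m)); apply/ga_scale/ga_one. Qed.

Lemma ga_sub A B : GA A -> GA B -> GA (A - B).
Proof. by move=> hA hB; rewrite -scaleN1r; apply: ga_add => //; exact: ga_scale. Qed.

Lemma ga_sum (I : finType) (P : pred I) (F : I -> EndV R n m) :
  (forall j, P j -> GA (F j)) -> GA (\sum_(j | P j) F j).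
Proof. by move=> H; apply: big_ind => //; [exact: ga_zero | exact: ga_add]. Qed.

Lemma gen_alg_sub (H : EndV R n m -> Prop) A :
  (forall B, G B -> gen_alg H B) -> GA A -> gen_alg H A.
Proof.
move=> GH; elim=> {A} [A /GH //| |A B _ hA _ hB|A B _ hA _ hB|r A _ hA].
- exact: ga_one.
- exact: ga_add.
- exact: ga_mul.
- exact: ga_scale.
Qed.

End GeneratedAlgebra.

Section ChevalleyCoefficients.
Variables (R : comPzRingType) (q qi : R).
Hypothesis hq : q * qi = 1.
Local Notation qp := (qpow q qi).
Variables (n i : nat).
Hypothesis hi : (i.+1 < n)%N.

Definition weight m (J : tens n m) : int := \sum_(k < m) cw i (J k).

Definition econd m (J' J : tens n m) :=
  [forall k, (J' k == J k) || ((nat_of_ord (J k) == i.+1) && (nat_of_ord (J' k) == i))].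
Definition fcond m (J' J : tens n m) :=
  [forall k, (J' k == J k) || ((nat_of_ord (J k) == i) && (nat_of_ord (J' k) == i.+1))].

Definition e_exp m (J' J : tens n m) : int :=
  \sum_(k < m) (if J' k != J k then
     \sum_(p < m) (if (k < p)%N && (J' p == J p) then cw i (J p) else 0) else 0).
Definition f_exp m (J' J : tens n m) : int :=
  \sum_(k < m) (if J' k != J k then
     \sum_(p < m) (if (p < k)%N && (J' p == J p) then cw i (J p) else 0) else 0).

Definition e_coef m r (J' J : tens n m) : R :=
  if econd J' J && (ndiff J' J == r) then qp (- e_exp J' J) else 0.
Definition f_coef m s (J' J : tens n m) : R :=
  if fcond J' J && (ndiff J' J == s) then qp (f_exp J' J) else 0.

Lemma e_mxE m r : e_mx q qi n m i r = mx_of (@e_coef m r).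
Proof.
apply: mx_of_eq => J' J; rewrite /e_coef card_diffset.
congr (if _ then qp (- _) else _); rewrite /e_exp big_mkcond /=.
apply: eq_bigr => k _; rewrite inE; case: ifP => // _.
by rewrite big_mkcond; apply: eq_bigr => p _; rewrite inE negbK.
Qed.

Lemma f_mxE m s : f_mx q qi n m i s = mx_of (@f_coef m s).
Proof.
apply: mx_of_eq => J' J; rewrite /f_coef card_diffset.
congr (if _ then qp _ else _); rewrite /f_exp big_mkcond /=.
apply: eq_bigr => k _; rewrite inE; case: ifP => // _.
by rewrite big_mkcond; apply: eq_bigr => p _; rewrite inE negbK.
Qed.

Lemma e_coef0 m (J' J : tens n m) : e_coef 0 J' J = (J' == J)%:R.
Proof.
rewrite /e_coef ndiff_eq0; case: eqP => [->|]; last by rewrite andbF.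
rewrite andbT (_ : econd J J = true); last by apply/forallP => k; rewrite eqxx.
by rewrite /e_exp big1 // => k _; rewrite eqxx.
Qed.

Lemma f_coef0 m (J' J : tens n m) : f_coef 0 J' J = (J' == J)%:R.
Proof.
rewrite /f_coef ndiff_eq0; case: eqP => [->|]; last by rewrite andbF.
rewrite andbT (_ : fcond J J = true); last by apply/forallP => k; rewrite eqxx.
by rewrite /f_exp big1 // => k _; rewrite eqxx.
Qed.

Lemma weight_tens0 (a : tens n 0) : weight a = 0.
Proof. by rewrite /weight big_ord0. Qed.

Lemma e_coef_tens0 r (a' a : tens n 0) : e_coef r a' a = (r == 0)%N%:R.
Proof.
rewrite /e_coef /econd /ndiff /e_exp !big_ord0.
rewrite (_ : [forall k : 'I_0, _] = true); last by apply/forallP => [[]].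
by rewrite /= eq_sym; case: (r == 0)%N.
Qed.

Lemma f_coef_tens0 s (a' a : tens n 0) : f_coef s a' a = (s == 0)%N%:R.
Proof.
rewrite /f_coef /fcond /ndiff /f_exp !big_ord0.
rewrite (_ : [forall k : 'I_0, _] = true); last by apply/forallP => [[]].
by rewrite /= eq_sym; case: (s == 0)%N.
Qed.

Definition vi : 'I_n := Ordinal (ltnW hi).
Definition vi1 : 'I_n := Ordinal hi.

Lemma eq_vi (x : 'I_n) : (nat_of_ord x == i) = (x == vi).
Proof. by []. Qed.
Lemma eq_vi1 (x : 'I_n) : (nat_of_ord x == i.+1) = (x == vi1).
Proof. by []. Qed.

Lemma vi_neq : (vi == vi1) = false.
Proof. by apply/eqP => /(congr1 val) /=; lia. Qed.
Lemma vi1_neq : (vi1 == vi) = false.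
Proof. by rewrite eq_sym vi_neq. Qed.

Lemma vi1_vi (x : 'I_n) : (x == vi1) && (x == vi) = false.
Proof. by apply/andP => [[/eqP -> /eqP/(congr1 val)/=]]; lia. Qed.
Lemma vi_vi1 (x : 'I_n) : (x == vi) && (x == vi1) = false.
Proof. by rewrite andbC vi1_vi. Qed.

Lemma cw_vi : cw i vi = 1.
Proof. by rewrite /cw /= eqxx; have -> : (i == i.+1) = false by lia. Qed.
Lemma cw_vi1 : cw i vi1 = -1.
Proof. by rewrite /cw /= eqxx; have -> : (i.+1 == i) = false by lia. Qed.
Lemma cw_other (x : 'I_n) : x != vi -> x != vi1 -> cw i x = 0.
Proof. by move=> h0 h1; rewrite /cw eq_vi eq_vi1 (negbTE h0) (negbTE h1). Qed.

Lemma weight_snoc m (a : tens n m) x : weight (snoc a x) = weight a + cw i x.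
Proof.
rewrite /weight big_ord_recr_lift snoc_max; congr (_ + _).
by apply: eq_bigr => k _; rewrite snoc_lift.
Qed.

Lemma econd_snoc m (a' a : tens n m) x' x :
  econd (snoc a' x') (snoc a x) = econd a' a && ((x' == x) || (x == vi1) && (x' == vi)).
Proof.
rewrite /econd forall_ord_recr !snoc_max; congr (_ && _).
by apply: eq_forallb => k; rewrite !snoc_lift.
Qed.

Lemma fcond_snoc m (a' a : tens n m) x' x :
  fcond (snoc a' x') (snoc a x) = fcond a' a && ((x' == x) || (x == vi) && (x' == vi1)).
Proof.
rewrite /fcond forall_ord_recr !snoc_max; congr (_ && _).
by apply: eq_forallb => k; rewrite !snoc_lift.
Qed.

(* The appended position lies after every changed position, and no position
   lies after it. *)
Lemma e_exp_snoc m (a' a : tens n m) x' x :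
  e_exp (snoc a' x') (snoc a x) =
  e_exp a' a + (ndiff a' a)%:Z * (if x' == x then cw i x else 0).
Proof.
rewrite /e_exp big_ord_recr_lift !snoc_max.
have -> : (if x' != x then \sum_(p < m.+1) (if (@ord_max m < p)%N &&
     (snoc a' x' p == snoc a x p) then cw i (snoc a x p) else 0) else 0) = 0.
  by case: ifP => // _; apply: big1 => p _; rewrite ltnNge -ltnS ltn_ord.
rewrite addr0 /ndiff Posz_sum big_distrl /= -big_split /=; apply: eq_bigr => k _.
rewrite !snoc_lift; case: ifP => _; last by rewrite mul0r addr0.
rewrite big_ord_recr_lift !snoc_max mul1r bump_ord (ltn_ord k); congr (_ + _).
by apply: eq_bigr => p _; rewrite !snoc_lift lift_max.
Qed.

Lemma f_exp_snoc m (a' a : tens n m) x' x :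
  f_exp (snoc a' x') (snoc a x) =
  f_exp a' a + (if x' != x then
    \sum_(p < m) (if a' p == a p then cw i (a p) else 0) else 0).
Proof.
rewrite /f_exp big_ord_recr_lift !snoc_max; congr (_ + _).
  apply: eq_bigr => k _; rewrite !snoc_lift; case: ifP => // _.
  rewrite big_ord_recr_lift !snoc_max.
  have -> : (@ord_max m < lift ord_max k)%N = false.
    by rewrite lift_max ltnNge ltnW.
  by rewrite /= addr0; apply: eq_bigr => p _; rewrite !snoc_lift !bump_ord.
case: ifP => // _; rewrite big_ord_recr_lift ltnn addr0.
by apply: eq_bigr => p _; rewrite !snoc_lift lift_max (ltn_ord p).
Qed.

Lemma e_coef_snoc m r (a' a : tens n m) x' x :
  e_coef r (snoc a' x') (snoc a x) =
  (x' == x)%:R * qp (- (r%:Z * cw i x)) * e_coef r a' a +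
  ((x == vi1) && (x' == vi) && (0 < r)%N)%:R * e_coef r.-1 a' a.
Proof.
rewrite /e_coef econd_snoc ndiff_snoc e_exp_snoc.
case: eqP => [->|ne].
  rewrite /= andbT addn0 vi1_vi /= mul1r mul0r addr0.
  case: ifP => [/andP[_ /eqP <-]|_]; last by rewrite mulr0.
  by rewrite opprD qpowD // mulrC.
rewrite /= !mul0r add0r mulr0 addr0 addn1.
case: ((x == vi1) && (x' == vi)); last by rewrite andbF mul0r.
rewrite andbT; case: r => [|r] /=; first by rewrite andbF mul0r.
by rewrite mul1r eqSS.
Qed.

Lemma fcond_sum_fixed m (a' a : tens n m) : fcond a' a ->
  \sum_(p < m) (if a' p == a p then cw i (a p) else 0) = weight a - (ndiff a' a)%:Z.
Proof.
move=> /forallP H; rewrite /weight /ndiff Posz_sum -sumrB; apply: eq_bigr => p _.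
move: (H p); case: eqP => [_ _|_ /= /andP[/eqP hp _]]; first by rewrite subr0.
by rewrite /cw hp eqxx (_ : (i == i.+1) = false) //; lia.
Qed.

Lemma f_coef_snoc m s (a' a : tens n m) x' x :
  f_coef s (snoc a' x') (snoc a x) =
  (x' == x)%:R * f_coef s a' a +
  ((x == vi) && (x' == vi1) && (0 < s)%N)%:R * qp (weight a - (s.-1)%:Z) * f_coef s.-1 a' a.
Proof.
rewrite /f_coef fcond_snoc ndiff_snoc f_exp_snoc.
case: eqP => [->|ne].
  by rewrite /= andbT addn0 vi_vi1 /= mul1r !mul0r !addr0.
rewrite /= !mul0r add0r addn1.
case: ((x == vi) && (x' == vi1)); last by rewrite andbF !mul0r.
rewrite andbT; case: s => [|s] /=; first by rewrite andbF !mul0r.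
rewrite mul1r eqSS; case: ifP => [/andP[hf /eqP hd]|]; last by rewrite mulr0.
by rewrite fcond_sum_fixed // hd qpowD // mulrC.
Qed.

Lemma e_coef_weight m r (a' a : tens n m) :
  e_coef r a' a != 0 -> weight a' = weight a + (2 * r)%N%:Z.
Proof.
rewrite /e_coef; case: ifP => [/andP[/forallP H /eqP <-] _|]; last by rewrite eqxx.
apply/eqP; rewrite -subr_eq0 opprD addrA /weight -sumrB /ndiff PoszM Posz_sum.
rewrite mulr_sumr -sumrB; apply/eqP/big1 => p _; move: (H p).
case: eqP => [-> _|_ /= /andP[/eqP h1 /eqP h2]]; first by rewrite !subrr.
rewrite /cw h1 h2 !eqxx.
by have [-> ->] : (i == i.+1) = false /\ (i.+1 == i) = false by split; lia.
Qed.

Lemma f_coef_weight m s (a' a : tens n m) :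
  f_coef s a' a != 0 -> weight a' = weight a - (2 * s)%N%:Z.
Proof.
rewrite /f_coef; case: ifP => [/andP[/forallP H /eqP <-] _|]; last by rewrite eqxx.
apply/eqP; rewrite -subr_eq0 opprD opprK addrA /weight -sumrB /ndiff PoszM Posz_sum.
rewrite mulr_sumr -big_split; apply/eqP/big1 => p _; move: (H p).
case: eqP => [-> _|_ /= /andP[/eqP h1 /eqP h2]]; first by rewrite !subrr.
rewrite /cw h1 h2 !eqxx.
by have [-> ->] : (i == i.+1) = false /\ (i.+1 == i) = false by split; lia.
Qed.

Definition ef_coef m r s (a' a : tens n m) : R := \sum_(b : tens n m) e_coef r a' b * f_coef s b a.
Definition fe_coef m s' r' (g : int -> R) (a' a : tens n m) : R :=
  \sum_(b : tens n m) f_coef s' a' b * g (weight b) * e_coef r' b a.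

Lemma ef_coef_snoc_inner m r s (a' b a : tens n m) x' x :
  \sum_(y : 'I_n) e_coef r (snoc a' x') (snoc b y) * f_coef s (snoc b y) (snoc a x) =
  (x' == x)%:R * qp (- (r%:Z * cw i x)) * (e_coef r a' b * f_coef s b a)
  + ((x == vi) && (x' == vi1) && (0 < s)%N)%:R * qp (- (r%:Z * cw i vi1)) *
      qp (weight a - (s.-1)%:Z) * (e_coef r a' b * f_coef s.-1 b a)
  + ((x == vi1) && (x' == vi) && (0 < r)%N)%:R * (e_coef r.-1 a' b * f_coef s b a)
  + ((x == vi) && (x' == vi) && (0 < r)%N && (0 < s)%N)%:R * qp (weight a - (s.-1)%:Z) *
      (e_coef r.-1 a' b * f_coef s.-1 b a).
Proof.
under eq_bigr do rewrite e_coef_snoc f_coef_snoc.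
set E0 := e_coef r a' b; set E1 := e_coef r.-1 a' b.
set F0 := f_coef s b a; set F1 := f_coef s.-1 b a; set W := qp (weight a - (s.-1)%:Z).
rewrite (eq_bigr (fun y =>
   (y == x)%:R * ((x' == y)%:R * qp (- (r%:Z * cw i y)) * E0 * F0)
 + (y == vi1)%:R * ((x' == y)%:R * qp (- (r%:Z * cw i y)) * E0 * (x == vi)%:R * (0 < s)%N%:R * W * F1)
 + (y == x)%:R * ((y == vi1)%:R * (x' == vi)%:R * (0 < r)%N%:R * E1 * F0)
 + (y == vi1)%:R * ((x' == vi)%:R * (0 < r)%N%:R * E1 * (x == vi)%:R * (y == vi1)%:R * (0 < s)%N%:R * W * F1)));
  last by move=> y _; rewrite !natr_andb; ring.
rewrite !big_split /= !sum_delta_mulr eqxx !natr_andb (_ : true%:R = 1 :> R) //; ring.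
Qed.

Lemma fe_coef_snoc_inner m s' r' (g : int -> R) (a' b a : tens n m) x' x :
  \sum_(y : 'I_n) f_coef s' (snoc a' x') (snoc b y) * g (weight (snoc b y)) * e_coef r' (snoc b y) (snoc a x) =
  (x' == x)%:R * qp (- (r'%:Z * cw i x)) * (f_coef s' a' b * g (weight b + cw i x) * e_coef r' b a)
  + ((x' == vi) && (x == vi1) && (0 < r')%N)%:R * (f_coef s' a' b * g (weight b + 1) * e_coef r'.-1 b a)
  + ((x == vi) && (x' == vi1) && (0 < s')%N)%:R * qp (- (r'%:Z * cw i x)) *
      (qp (weight b - (s'.-1)%:Z) * f_coef s'.-1 a' b * g (weight b + 1) * e_coef r' b a)
  + ((x' == vi1) && (x == vi1) && (0 < s')%N && (0 < r')%N)%:R *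
      (qp (weight b - (s'.-1)%:Z) * f_coef s'.-1 a' b * g (weight b + 1) * e_coef r'.-1 b a).
Proof.
under eq_bigr do rewrite f_coef_snoc e_coef_snoc weight_snoc.
set E0 := e_coef r' b a; set E1 := e_coef r'.-1 b a.
set F0 := f_coef s' a' b; set F1 := f_coef s'.-1 a' b; set W := qp (weight b - (s'.-1)%:Z).
rewrite (eq_bigr (fun y =>
   (y == x)%:R * ((x' == y)%:R * qp (- (r'%:Z * cw i x)) * F0 * g (weight b + cw i y) * E0)
 + (y == vi)%:R * ((x' == y)%:R * F0 * g (weight b + cw i y) * (x == vi1)%:R * (0 < r')%N%:R * E1)
 + (y == vi)%:R * ((x' == vi1)%:R * (0 < s')%N%:R * W * F1 * g (weight b + cw i y) * (y == x)%:R * qp (- (r'%:Z * cw i x)) * E0)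
 + (y == vi)%:R * ((x' == vi1)%:R * (0 < s')%N%:R * W * F1 * g (weight b + cw i y) * (x == vi1)%:R * (y == vi)%:R * (0 < r')%N%:R * E1)));
  last by move=> y _; rewrite !natr_andb; ring.
rewrite !big_split /= !sum_delta_mulr eqxx !natr_andb (_ : true%:R = 1 :> R) // cw_vi.
rewrite [vi == x]eq_sym; ring.
Qed.

Lemma ef_coef_snoc m r s (a' a : tens n m) x' x :
  ef_coef r s (snoc a' x') (snoc a x) =
  (x' == x)%:R * qp (- (r%:Z * cw i x)) * ef_coef r s a' a
  + ((x == vi) && (x' == vi1) && (0 < s)%N)%:R * qp (- (r%:Z * cw i vi1)) *
      qp (weight a - (s.-1)%:Z) * ef_coef r s.-1 a' a
  + ((x == vi1) && (x' == vi) && (0 < r)%N)%:R * ef_coef r.-1 s a' a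
  + ((x == vi) && (x' == vi) && (0 < r)%N && (0 < s)%N)%:R * qp (weight a - (s.-1)%:Z) *
      ef_coef r.-1 s.-1 a' a.
Proof.
rewrite /ef_coef sum_tens_snoc; under eq_bigr do rewrite ef_coef_snoc_inner.
by rewrite !big_split !mulr_sumr.
Qed.

Lemma fe_coef_snoc m s' r' (g : int -> R) (a' a : tens n m) x' x :
  fe_coef s' r' g (snoc a' x') (snoc a x) =
  (x' == x)%:R * qp (- (r'%:Z * cw i x)) * fe_coef s' r' (fun w => g (w + cw i x)) a' a
  + ((x' == vi) && (x == vi1) && (0 < r')%N)%:R * fe_coef s' r'.-1 (fun w => g (w + 1)) a' a
  + ((x == vi) && (x' == vi1) && (0 < s')%N)%:R * qp (- (r'%:Z * cw i x)) *
      fe_coef s'.-1 r' (fun w => qp (w - (s'.-1)%:Z) * g (w + 1)) a' a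
  + ((x' == vi1) && (x == vi1) && (0 < s')%N && (0 < r')%N)%:R *
      fe_coef s'.-1 r'.-1 (fun w => qp (w - (s'.-1)%:Z) * g (w + 1)) a' a.
Proof.
rewrite /fe_coef sum_tens_snoc; under eq_bigr do rewrite fe_coef_snoc_inner.
rewrite !big_split !mulr_sumr; congr (_ + _ + _ + _); apply: eq_bigr => b _; ring.
Qed.

(* Lusztig's formula e^(r) f^(s) = sum_j f^(s-j) [K_i; 2j - r - s; j] e^(r-j). *)
Definition ef_rhs_qbin (r s j : nat) : int -> R :=
  fun w => qbin q qi (w + (2 * j)%N%:Z - r%:Z - s%:Z) j.

Definition ef_rhs m r s (a' a : tens n m) : R :=
  \sum_(j < r.+1) (j <= s)%N%:R * fe_coef (s - j)%N (r - j)%N (ef_rhs_qbin r s j) a' a.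

Lemma ef_coef_tens0 r s (a' a : tens n 0) : ef_coef r s a' a = ef_rhs r s a' a.
Proof.
rewrite /ef_coef /ef_rhs /fe_coef (sum_tens0 _ a).
under eq_bigr do rewrite (sum_tens0 _ a) e_coef_tens0 f_coef_tens0 weight_tens0.
rewrite e_coef_tens0 f_coef_tens0 /ef_rhs_qbin.
case: r => [|r].
  by rewrite big_ord1 /= subn0 qbin0 !mulr1 mul1r.
rewrite (_ : (r.+1 == 0)%N = false) // mul0r; apply/esym/big1 => j _.
case: (ltnP j r.+1) => hj.
  by rewrite (_ : (r.+1 - j == 0)%N = false) ?mulr0 //; lia.
case: (boolP (j <= s)%N) => hjs; last by rewrite mul0r.
case: (boolP (s - j == 0)%N) => hsj; last first.
  by rewrite (_ : false%:R = 0 :> R) // !mul0r mulr0.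
have ej : nat_of_ord j = r.+1 by have := ltn_ord j; lia.
have es : s = r.+1 by move/eqP: hsj; lia.
rewrite ej es (_ : (2 * r.+1)%N%:Z - r.+1%:Z - r.+1%:Z = 0); last by lia.
by rewrite (_ : qbin q qi 0 r.+1 = 0) // mulr0 mul0r mulr0.
Qed.

Lemma fe_coef_congr m s' r' g h (a' a : tens n m) :
  (forall w, w = weight a + (2 * r')%N%:Z -> g w = h w) -> fe_coef s' r' g a' a = fe_coef s' r' h a' a.
Proof.
move=> H; apply: eq_bigr => b _; case: (eqVneq (e_coef r' b a) 0) => [->|nz].
  by rewrite !mulr0.
by rewrite (H _ (e_coef_weight nz)).
Qed.

Lemma fe_coef_scale m s' r' g c (a' a : tens n m) :
  c * fe_coef s' r' g a' a = fe_coef s' r' (fun w => c * g w) a' a.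
Proof. by rewrite /fe_coef mulr_sumr; apply: eq_bigr => b _ /=; ring. Qed.

Lemma fe_coef_add m s' r' g h (a' a : tens n m) :
  fe_coef s' r' g a' a + fe_coef s' r' h a' a = fe_coef s' r' (fun w => g w + h w) a' a.
Proof. by rewrite /fe_coef -big_split; apply: eq_bigr => b _ /=; ring. Qed.

Lemma ef_rhs_qbin0 r s w : ef_rhs_qbin r s 0 w = 1.
Proof. by rewrite /ef_rhs_qbin qbin0. Qed.

Lemma sum_split_eq k (F G H : 'I_k -> R) :
  (forall j, F j + G j = H j) -> \sum_(j < k) F j + \sum_(j < k) G j = \sum_(j < k) H j.
Proof. by move=> E; rewrite -big_split; apply: eq_bigr => j _; exact: E. Qed.

(* Induction step of ef_coef_commute, one lemma per pair (x', x) of last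
   letters of the row and column indices: both sides have been expanded by
   ef_coef_snoc and fe_coef_snoc, and the q-Pascal rule matches them. *)
Section Step.
Variable m : nat.
Hypothesis IH : forall r s (a' a : tens n m), ef_coef r s a' a = ef_rhs r s a' a.

Lemma ef_step_vi_vi r s (b' b : tens n m) :
  qp (- (r%:Z * 1)) * ef_coef r s b' b +
  ((0 < r)%N && (0 < s)%N)%:R * qp (weight b - (s.-1)%:Z) * ef_coef r.-1 s.-1 b' b =
  \sum_(j < r.+1) (j <= s)%N%:R *
     (qp (- ((r - j)%N%:Z * 1)) * fe_coef (s - j)%N (r - j)%N (fun w => ef_rhs_qbin r s j (w + 1)) b' b).
Proof.
rewrite !IH /ef_rhs.
case: r => [|r].
  rewrite (_ : ((0 < 0)%N && (0 < s)%N) = false) // mulr0n !mul0r addr0 !big_ord1 mulrCA; congr (_ * (_ * _)).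
  by apply: fe_coef_congr => w _; rewrite !ef_rhs_qbin0.
rewrite (big_ord_recl r.+1) [RHS](big_ord_recl r.+1).
rewrite (_ : (0 < r.+1)%N && (0 < s)%N = (0 < s)%N) // mulrDr -addrA.
congr (_ + _).
  rewrite mulrCA; congr (_ * (_ * _)).
  by apply: fe_coef_congr => w _; rewrite !ef_rhs_qbin0.
rewrite !mulr_sumr; apply: sum_split_eq => j.
rewrite !lift0.
case: s => [|s]; first by rewrite /= mulr0n !mul0r !mulr0 add0r.
rewrite (_ : s.+1.-1 = s) // (_ : (0 < s.+1)%N = true) // ltnS !subSS.
case: (boolP (j <= s)%N) => hjs; last by rewrite mulr0n !mul0r !mulr0 add0r.
rewrite mulr1n !mul1r !fe_coef_scale fe_coef_add; apply: fe_coef_congr => w hw.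
have hj : (j <= r)%N by have := ltn_ord j; lia.
rewrite /ef_rhs_qbin.
rewrite (_ : w + 1 + (2 * j.+1)%N%:Z - r.+1%:Z - s.+1%:Z =
   (w + (2 * j)%N%:Z - r%:Z - s%:Z) + 1); last by lia.
rewrite (_ : w + (2 * j.+1)%N%:Z - r.+1%:Z - s.+1%:Z =
   (w + (2 * j)%N%:Z - r%:Z - s%:Z)); last by lia.
rewrite qbinD1 // mulrDr !mulrA -!qpowD //.
congr (qp _ * _ + qp _ * _); lia.
Qed.

Lemma ef_step_vi1_vi r s (b' b : tens n m) :
  (0 < s)%N%:R * qp (- (r%:Z * -1)) * qp (weight b - (s.-1)%:Z) * ef_coef r s.-1 b' b =
  \sum_(j < r.+1) (j <= s)%N%:R *
     ((0 < s - j)%N%:R * qp (- ((r - j)%N%:Z * 1)) *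
      fe_coef (s - j).-1 (r - j)%N (fun w => qp (w - ((s - j).-1)%:Z) * ef_rhs_qbin r s j (w + 1)) b' b).
Proof.
rewrite IH /ef_rhs.
case: s => [|s].
  rewrite mulr0n !mul0r; apply/esym/big1 => j _.
  by rewrite !mul0r mulr0.
rewrite (_ : (0 < s.+1)%N = true) // mulr1n mul1r (_ : s.+1.-1 = s) // !mulr_sumr.
apply: eq_bigr => j _.
case: (leqP j s) => hjs; last first.
  by rewrite (_ : (0 < s.+1 - j)%N = false) ?mulr0n ?mul0r ?mulr0 //; lia.
rewrite (_ : (j <= s.+1)%N = true) ?mulr1n ?mul1r; last by lia.
rewrite (_ : (0 < s.+1 - j)%N = true) ?mulr1n ?mul1r; last by lia.
rewrite (_ : (s.+1 - j).-1 = (s - j)%N); last by lia.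
rewrite -mulrA.
have hj : (j <= r)%N by have := ltn_ord j; lia.
rewrite !fe_coef_scale; apply: fe_coef_congr => w hw.
rewrite /ef_rhs_qbin (_ : w + 1 + (2 * j)%N%:Z - r%:Z - s.+1%:Z = w + (2 * j)%N%:Z - r%:Z - s%:Z);
  last by lia.
rewrite !mulrA -!qpowD //; congr (qp _ * _); lia.
Qed.

Lemma ef_step_vi_vi1 r s (b' b : tens n m) :
  (0 < r)%N%:R * ef_coef r.-1 s b' b =
  \sum_(j < r.+1) (j <= s)%N%:R *
     ((0 < r - j)%N%:R * fe_coef (s - j)%N (r - j).-1 (fun w => ef_rhs_qbin r s j (w + 1)) b' b).
Proof.
rewrite IH /ef_rhs.
case: r => [|r].
  rewrite mulr0n !mul0r; apply/esym/big1 => j _.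
  by rewrite !mul0r mulr0.
rewrite (_ : (0 < r.+1)%N = true) // mulr1n mul1r (_ : r.+1.-1 = r) //.
rewrite [RHS]big_ord_recr /=.
rewrite (_ : (0 < r.+1 - r.+1)%N = false); last by lia.
rewrite mulr0n mul0r mulr0 addr0.
apply: eq_bigr => j _.
have hj : (j < r.+1)%N by [].
rewrite (_ : (0 < r.+1 - j)%N = true) ?mulr1n ?mul1r; last by lia.
rewrite (_ : (r.+1 - j).-1 = (r - j)%N); last by lia.
congr (_ * _); apply: fe_coef_congr => w _.
rewrite /ef_rhs_qbin; congr (qbin _ _ _ _); lia.
Qed.

Lemma ef_step_vi1_vi1 r s (b' b : tens n m) :
  qp (- (r%:Z * -1)) * ef_coef r s b' b =
  \sum_(j < r.+1) (j <= s)%N%:R *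
     (qp (- ((r - j)%N%:Z * -1)) * fe_coef (s - j)%N (r - j)%N (fun w => ef_rhs_qbin r s j (w + -1)) b' b
      + ((0 < s - j)%N && (0 < r - j)%N)%:R *
        fe_coef (s - j).-1 (r - j).-1 (fun w => qp (w - ((s - j).-1)%:Z) * ef_rhs_qbin r s j (w + 1)) b' b).
Proof.
rewrite IH /ef_rhs.
under [RHS]eq_bigr do rewrite mulrDr.
rewrite big_split /= [X in _ = _ + X]big_ord_recr /=.
rewrite (_ : (0 < r - r)%N = false); last by lia.
rewrite andbF mulr0n mul0r mulr0 addr0.
case: r => [|r].
  rewrite !big_ord1 big_ord0 addr0 mulrCA; congr (_ * (_ * _)).
  by apply: fe_coef_congr => w _; rewrite !ef_rhs_qbin0.
rewrite (big_ord_recl r.+1) [X in _ = X + _](big_ord_recl r.+1) mulrDr -addrA.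
congr (_ + _).
  rewrite mulrCA; congr (_ * (_ * _)).
  by apply: fe_coef_congr => w _; rewrite !ef_rhs_qbin0.
rewrite mulr_sumr; apply/esym; apply: sum_split_eq => j.
rewrite !lift0.
have hj : (j <= r)%N by have := ltn_ord j; lia.
rewrite (_ : (0 < r.+1 - j)%N = true); last by lia.
rewrite andbT (_ : (r.+1 - j).-1 = (r - j)%N); last by lia.
rewrite (_ : (r.+1 - j.+1)%N = (r - j)%N); last by lia.
case: (ltnP j s) => hjs; last first.
  rewrite (_ : (0 < s - j)%N = false); last by lia.
  by rewrite mulr0n !mul0r !mulr0 add0r.
rewrite (_ : (j <= s)%N = true); last by lia.
rewrite (_ : (0 < s - j)%N = true); last by lia.
rewrite (_ : (s - j).-1 = (s - j.+1)%N); last by lia.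
rewrite mulr1n !mul1r fe_coef_scale fe_coef_add fe_coef_scale; apply: fe_coef_congr => w _.
rewrite /ef_rhs_qbin.
rewrite (_ : w + (2 * j.+1)%N%:Z - r.+1%:Z - s%:Z =
   (w + (2 * j)%N%:Z + 1 - r.+1%:Z - s%:Z) + 1); last by lia.
rewrite (_ : w + -1 + (2 * j.+1)%N%:Z - r.+1%:Z - s%:Z =
   (w + (2 * j)%N%:Z + 1 - r.+1%:Z - s%:Z)); last by lia.
rewrite (_ : w + 1 + (2 * j)%N%:Z - r.+1%:Z - s%:Z =
   (w + (2 * j)%N%:Z + 1 - r.+1%:Z - s%:Z)); last by lia.
rewrite qbinD1 // mulrDr !mulrA -!qpowD //.
congr (qp _ * _ + qp _ * _); lia.
Qed.

Lemma ef_step_other r s (b' b : tens n m) c :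
  c * qp (- 0) * ef_coef r s b' b =
  \sum_(j < r.+1) (j <= s)%N%:R *
     (c * qp (- 0) * fe_coef (s - j)%N (r - j)%N (fun w => ef_rhs_qbin r s j (w + 0)) b' b).
Proof.
rewrite IH /ef_rhs mulr_sumr; apply: eq_bigr => j _.
rewrite mulrCA; congr (_ * _).
by congr (_ * _); apply: fe_coef_congr => w _; rewrite addr0.
Qed.

End Step.

Ltac simpl_indicators :=
  rewrite ?vi_neq ?vi1_neq ?cw_vi ?cw_vi1 ?andbF ?andFb ?andTb ?andbT
    ?mulr0n ?mulr1n ?mul0r ?mulr0 ?add0r ?addr0 ?mul1r;
  under eq_bigr do rewrite ?andbF ?andFb ?andTb ?andbT
    ?mulr0n ?mulr1n ?mul0r ?mulr0 ?add0r ?addr0 ?mul1r.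

Lemma ef_coef_commute m r s (a' a : tens n m) : ef_coef r s a' a = ef_rhs r s a' a.
Proof.
elim: m r s a' a => [|m IH] r s a' a; first exact: ef_coef_tens0.
rewrite -(front_snoc a') -(front_snoc a).
move: (front a') (a' ord_max) (front a) (a ord_max) => b' x' b x.
rewrite ef_coef_snoc /ef_rhs; under eq_bigr do rewrite fe_coef_snoc.
have [->|nx0] := eqVneq x vi; [|have [->|nx1] := eqVneq x vi1].
- have [ex'|nx'0] := eqVneq x' vi; first by rewrite ?ex'; simpl_indicators; exact: ef_step_vi_vi.
  have [ex'|nx'1] := eqVneq x' vi1; first by rewrite ?ex'; simpl_indicators; exact: ef_step_vi1_vi.
  by simpl_indicators; apply/esym/big1 => j _; rewrite mulr0.
- have [ex'|nx'1] := eqVneq x' vi1; first by rewrite ?ex'; simpl_indicators; exact: ef_step_vi1_vi1.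
  have [ex'|nx'0] := eqVneq x' vi; first by rewrite ?ex'; simpl_indicators; exact: ef_step_vi_vi1.
  by simpl_indicators; apply/esym/big1 => j _; rewrite mulr0.
- by rewrite (cw_other nx0 nx1); simpl_indicators; exact: ef_step_other.
Qed.

Lemma e_mx_f_mx m t :
  e_mx q qi n m i t *m f_mx q qi n m i t =
  \sum_(j < t.+1) dmx (fun J : tens n m => qbin q qi (weight J) j) *m
      (f_mx q qi n m i (t - j) *m e_mx q qi n m i (t - j)).
Proof.
rewrite !e_mxE !f_mxE mx_of_mul.
under eq_bigr do rewrite !e_mxE !f_mxE mx_of_mul dmx_mulmx.
rewrite mx_of_sum; apply: mx_of_eq => J' J.
rewrite [LHS]ef_coef_commute /ef_rhs; apply: eq_bigr => j _.
rewrite (_ : (j <= t)%N = true) ?mul1r; last by have := ltn_ord j; lia.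
rewrite /fe_coef mulr_sumr; apply: eq_bigr => b _.
have [->|nz] := eqVneq (f_coef (t - j)%N J' b) 0; first by rewrite !(mul0r, mulr0).
rewrite (f_coef_weight nz) /ef_rhs_qbin mulrCA mulrA; congr (_ * _ * _).
by congr (qbin _ _ _ _); have := ltn_ord j; lia.
Qed.

End ChevalleyCoefficients.

Section WeightSpaces.
Variables (R : comPzRingType) (q qi : R).
Hypothesis hq : q * qi = 1.
Local Notation qp := (qpow q qi).
Variables (n m i : nat).
Hypothesis hi : (i.+1 < n)%N.
Local Notation T := (tens n m).
Local Notation Mx := (EndV R n m).
Local Notation GA := (gen_alg (U'_gens q qi (n:=n) (m:=m))).

Lemma e_mx0 : e_mx q qi n m i 0 = 1%:M.
Proof. by rewrite e_mxE mx_of_one; apply: mx_of_eq => J' J; rewrite e_coef0. Qed.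
Lemma f_mx0 : f_mx q qi n m i 0 = 1%:M.
Proof. by rewrite f_mxE mx_of_one; apply: mx_of_eq => J' J; rewrite f_coef0. Qed.

Lemma e_mx_in l : GA (e_mx q qi n m i l).
Proof. by apply: ga_gen; right; exists i, l; split => //; left. Qed.
Lemma f_mx_in l : GA (f_mx q qi n m i l).
Proof. by apply: ga_gen; right; exists i, l; split => //; right. Qed.
Lemma K_mx_in : GA (K_mx q qi n m i).
Proof. by apply: ga_gen; left; exists i. Qed.

(* The j = t term of Lusztig's formula for e^(t) f^(t) is [K_i; t]. *)
Lemma dmx_qbin_in t : GA (dmx (fun J : T => qbin q qi (weight i J) t)).
Proof.
elim/ltn_ind: t => t IH.
have H := e_mx_f_mx hq hi m t.
rewrite big_ord_recr /= subnn f_mx0 e_mx0 mulmx1 mulmx1 in H.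
have -> : dmx (fun J : T => qbin q qi (weight i J) t) =
   e_mx q qi n m i t *m f_mx q qi n m i t -
   \sum_(j < t) dmx (fun J : T => qbin q qi (weight i J) j) *m
      (f_mx q qi n m i (t - j) *m e_mx q qi n m i (t - j)).
  by rewrite H addrAC subrr add0r.
apply: ga_sub; first by apply: ga_mul; [exact: e_mx_in | exact: f_mx_in].
apply: ga_sum => j _; apply: ga_mul; first by apply: IH.
by apply: ga_mul; [exact: f_mx_in | exact: e_mx_in].
Qed.

Lemma K_mx_dmx : K_mx q qi n m i = dmx (fun J : T => qp (weight i J)).
Proof. by []. Qed.

(* q-Pascal: [K + c + 1; k + 1] = q^-(k+1) [K + c; k + 1] + q^(c-k) K [K + c; k]. *)
Lemma dmx_qbin_shift_in c k : GA (dmx (fun J : T => qbin q qi (weight i J + c%:Z) k)).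
Proof.
elim: c k => [|c IH] k.
  rewrite (eq_dmx (psi := fun J : T => qbin q qi (weight i J) k)); first exact: dmx_qbin_in.
  by move=> J; rewrite addr0.
case: k => [|k].
  by rewrite (eq_dmx (psi := fun _ => 1)) ?dmx1; [exact: ga_one | move=> J; rewrite qbin0].
rewrite (eq_dmx (psi := fun J : T => qp (- (k.+1)%:Z) * qbin q qi (weight i J + c%:Z) k.+1 +
   qp (c%:Z - k%:Z) * (qp (weight i J) * qbin q qi (weight i J + c%:Z) k))); last first.
  move=> J; rewrite (_ : weight i J + c.+1%:Z = (weight i J + c%:Z) + 1); last by lia.
  rewrite qbinD1 // mulrA -qpowD //; congr (_ + qp _ * _); lia.
rewrite -dmx_add -!dmx_scale -dmx_mul.
apply: ga_add; apply: ga_scale; first exact: IH.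
by apply: ga_mul; [rewrite -K_mx_dmx; exact: K_mx_in | exact: IH].
Qed.

Lemma cw_bound (j : 'I_n) : -1 <= cw i j <= 1.
Proof. by rewrite /cw; case: (_ == _); case: (_ == _). Qed.

Lemma weight_bound (J : T) : - (m%:Z) <= weight i J <= m%:Z.
Proof.
have hs : \sum_(k < m) (1 : int) = m%:Z by rewrite sumr_const card_ord natz.
apply/andP; split.
  by rewrite -hs -sumrN; apply: ler_sum => k _; case/andP: (cw_bound (J k)).
by rewrite -hs; apply: ler_sum => k _; case/andP: (cw_bound (J k)).
Qed.

Definition wtn (J : T) : nat := absz (weight i J + m%:Z).

Lemma wtnE J : (wtn J)%:Z = weight i J + m%:Z.
Proof.
rewrite /wtn gez0_abs //; case/andP: (weight_bound J) => h1 _.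
by rewrite -lerBlDr sub0r.
Qed.

Lemma wtn_lt J : (wtn J < (2 * m).+1)%N.
Proof.
have := wtnE J; case/andP: (weight_bound J) => h1 h2 e.
by rewrite ltnS -lez_nat e; lia.
Qed.

Lemma dmx_qbin_wtn_in k : GA (dmx (fun J : T => qbin_nat q qi (wtn J) k)).
Proof.
rewrite (eq_dmx (psi := fun J : T => qbin q qi (weight i J + m%:Z) k)).
  exact: dmx_qbin_shift_in.
by move=> J; rewrite -wtnE.
Qed.

Definition wtn_ind (x : nat) : Mx := dmx (fun J : T => (wtn J == x)%:R).

Lemma wtn_ind_out x : (2 * m < x)%N -> wtn_ind x = 0.
Proof.
move=> hx; rewrite -dmx0; apply: eq_dmx => J.
by rewrite (_ : (wtn J == x) = false) //; have := wtn_lt J; lia.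
Qed.

Lemma dmx_qbin_wtn x :
  dmx (fun J : T => qbin_nat q qi (wtn J) x) =
  \sum_(y < (2 * m).+1) qbin_nat q qi y x *: wtn_ind y.
Proof.
under eq_bigr do rewrite dmx_scale.
rewrite dmx_sum; apply: eq_dmx => J.
rewrite (bigD1 (Ordinal (wtn_lt J))) //= eqxx mulr1 big1 ?addr0 // => y hy.
rewrite (_ : (wtn J == y) = false) ?mulr0 //.
by apply/negbTE; apply: contra hy => /eqP e; apply/eqP/val_inj.
Qed.

(* [y; x] = 0 for y < x and [x; x] = 1, so the projectors wtn_ind can be
   solved for by downward induction on x *)
Lemma wtn_ind_in x : GA (wtn_ind x).
Proof.
have [k] : exists k, (2 * m < x + k)%N by exists (2 * m).+1; lia.
elim: k x => [|k IH] x hk; first by rewrite wtn_ind_out; [exact: ga_zero | lia].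
have [hx|hx] := ltnP (2 * m) x; first by rewrite wtn_ind_out //; exact: ga_zero.
have hx1 : (x < (2 * m).+1)%N by [].
have -> : wtn_ind x = dmx (fun J : T => qbin_nat q qi (wtn J) x) -
    \sum_(y < (2 * m).+1 | y != Ordinal hx1) qbin_nat q qi y x *: wtn_ind y.
  by rewrite dmx_qbin_wtn (bigD1 (Ordinal hx1)) //= qbin_nat_id scale1r addrK.
apply: ga_sub; first exact: dmx_qbin_wtn_in.
apply: ga_sum => y hy; have [hyx|hxy] := ltnP y x.
  by rewrite qbin_nat_small // scale0r; exact: ga_zero.
have ne : (y : nat) != x by apply: contra hy => /eqP e; apply/eqP/val_inj.
by apply/ga_scale/IH; lia.
Qed.

End WeightSpaces.

Section JointWeightSpaces.
Variables (R : comPzRingType) (q qi : R).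
Hypothesis hq : q * qi = 1.
Variables (n m : nat).
Hypothesis hn : (1 <= n)%N.
Local Notation T := (tens n m).
Local Notation GA := (gen_alg (U'_gens q qi (n:=n) (m:=m))).

Definition same_weights_upto k (J J0 : T) := [forall i : 'I_k, weight i J == weight i J0].

Lemma same_weights_upto_in k (J0 : T) :
  (k <= n.-1)%N -> GA (dmx (fun J : T => (same_weights_upto k J J0)%:R)).
Proof.
elim: k => [|k IH] hk.
  rewrite (eq_dmx (psi := fun _ => 1)) ?dmx1; first exact: ga_one.
  by move=> J; rewrite /same_weights_upto (_ : [forall i : 'I_0, _] = true) //; apply/forallP => [[]].
have hi : (k.+1 < n)%N by lia.
have -> : dmx (fun J : T => (same_weights_upto k.+1 J J0)%:R) =
    dmx (fun J : T => (same_weights_upto k J J0)%:R) *m wtn_ind R n m k (wtn k J0).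
  rewrite /wtn_ind dmx_mul; apply: eq_dmx => J.
  rewrite /same_weights_upto forall_ord_recr.
  have -> : (wtn k J == wtn k J0) = (weight k J == weight k J0).
    apply/eqP/eqP => [e|e]; last by rewrite /wtn e.
    by have := wtnE k J; rewrite e wtnE => /addIr.
  rewrite (eq_forallb (fun i => (_ : (weight (lift ord_max i) J == weight (lift ord_max i) J0) =
     (weight i J == weight i J0)))); last by move=> i; rewrite lift_max.
  by case: [forall i : 'I_k, _]; case: (weight k J == _); rewrite ?mulr0 ?mulr1.
by apply: ga_mul; [apply: IH; lia | exact: wtn_ind_in].
Qed.

Definition same_weights (J J0 : T) := same_weights_upto n.-1 J J0.

Lemma same_weights_refl J : same_weights J J.
Proof. by apply/forallP. Qed.

Lemma same_weights_sym J J' : same_weights J J' = same_weights J' J.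
Proof. by apply/forallP/forallP => H i; rewrite eq_sym H. Qed.

Lemma same_weights_trans J1 J2 J3 :
  same_weights J1 J2 -> same_weights J2 J3 -> same_weights J1 J3.
Proof. by move=> /forallP H1 /forallP H2; apply/forallP => i; rewrite (eqP (H1 i)) H2. Qed.

Definition weight_rep (J : T) : T := odflt J [pick K | same_weights K J].

Lemma same_weights_rep J : same_weights J (weight_rep J).
Proof.
by rewrite /weight_rep; case: pickP => [K|] /=; rewrite ?same_weights_refl // same_weights_sym.
Qed.

Lemma weight_rep_eq J J' : same_weights J J' -> weight_rep J = weight_rep J'.
Proof.
move=> E; rewrite /weight_rep (@eq_pick _ _ (fun K => same_weights K J')) => [|K].
  by case: pickP => [//|/(_ J')]; rewrite same_weights_refl.
apply/idP/idP => h; first exact: same_weights_trans h E.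
by apply: same_weights_trans h _; rewrite same_weights_sym.
Qed.

Lemma dmx_in (phi : T -> R) :
  (forall J J0, same_weights J J0 -> phi J = phi J0) -> GA (dmx phi).
Proof.
move=> hphi.
have -> : dmx phi =
    \sum_(J0 | weight_rep J0 == J0) phi J0 *: dmx (fun J => (same_weights J J0)%:R).
  under eq_bigr do rewrite dmx_scale.
  rewrite dmx_sum; apply: eq_dmx => J.
  have repJ := same_weights_rep J.
  rewrite (bigD1 (weight_rep J)) /=; last by rewrite -(weight_rep_eq repJ).
  rewrite repJ mulr1 -(hphi _ _ repJ) big1 ?addr0 // => J0 /andP[/eqP rep0 ne].
  case E: (same_weights J J0); rewrite ?mulr0 //.
  by move: ne; rewrite -{1}rep0 (weight_rep_eq E) eqxx.
by apply: ga_sum => J0 _; apply/ga_scale/same_weights_upto_in.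
Qed.

Definition count_letter (v : nat) (J : T) : nat := (\sum_(k < m) (nat_of_ord (J k) == v))%N.

Lemma weight_count i (J : T) :
  weight i J = (count_letter i J)%:Z - (count_letter i.+1 J)%:Z.
Proof. by rewrite /weight /count_letter !Posz_sum -sumrB. Qed.

Lemma sum_count_letter (J : T) : (\sum_(v < n) count_letter v J)%N = m.
Proof.
rewrite /count_letter exchange_big /= -[m in RHS]card_ord -sum1_card.
apply: eq_bigr => k _; rewrite (bigD1 (J k)) //= eqxx big1 // => v hv.
by rewrite (_ : (_ == _) = false) //; apply/negbTE; apply: contra hv => /eqP e; apply/eqP/val_inj.
Qed.

Lemma sum_count_letter_mul (h : 'I_n -> int) (J : T) :
  \sum_(k < m) h (J k) = \sum_(v < n) h v * (count_letter v J)%:Z.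
Proof.
under [RHS]eq_bigr do rewrite /count_letter Posz_sum mulr_sumr.
rewrite exchange_big /=; apply: eq_bigr => k _.
rewrite (bigD1 (J k)) //= eqxx mulr1 big1 ?addr0 // => v hv.
by rewrite (_ : (_ == _) = false) ?mulr0 //; apply/negbTE; apply: contra hv => /eqP e; apply/eqP/val_inj.
Qed.

(* consecutive count differences agree, and they sum to m - m = 0 *)
Lemma same_weights_count (J J0 : T) :
  same_weights J J0 -> forall v : 'I_n, count_letter v J = count_letter v J0.
Proof.
move=> /forallP E.
pose d (v : nat) : int := (count_letter v J)%:Z - (count_letter v J0)%:Z.
have dS v : (v.+1 < n)%N -> d v.+1 = d v.
  move=> hv; have hv' : (v < n.-1)%N by lia.
  by have /eqP := E (Ordinal hv'); rewrite /= !weight_count /d; lia.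
have d0 v : (v < n)%N -> d v = d 0.
  by elim: v => [//|v IHv] hv; rewrite dS //; apply: IHv; lia.
have : \sum_(v < n) d v = d 0 *+ n.
  by rewrite (eq_bigr (fun _ => d 0)) ?sumr_const ?card_ord // => v _; apply: d0.
rewrite /d sumrB -!Posz_sum !sum_count_letter subrr => /esym/eqP.
rewrite mulrn_eq0 => /orP[/eqP|/eqP dz v]; first lia.
by have := d0 v (ltn_ord v); rewrite /d dz; lia.
Qed.

Lemma qh_mx_in (h : 'I_n -> int) : GA (qh_mx q qi m h).
Proof.
rewrite (_ : qh_mx q qi m h = dmx (fun J : T => qpow q qi (\sum_(k < m) h (J k)))) //.
apply: dmx_in => J J0 E; rewrite !sum_count_letter_mul; congr qpow.
by apply: eq_bigr => v _; rewrite (same_weights_count E).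
Qed.

End JointWeightSpaces.

Unset Implicit Arguments.

Theorem theorem2p1 (R : comPzRingType) (q qi : R) (hq : q * qi = 1)
  (n : nat) (hn : (1 <= n)%N) (m : nat) (A : EndV R n m) :
  rho_U q qi n m A <-> rho_U' q qi n m A.
Proof.
split; apply: gen_alg_sub => B.
- case=> [[h ->]|hB]; first exact: qh_mx_in.
  by apply: ga_gen; right.
- case=> [[i [_ ->]]|hB]; last by apply: ga_gen; right.
  by apply: ga_gen; left; exists (cw i).
Qed.
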